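(* Let $E$ be a finite set and $V \subset \mathbb R^E$ a linear subspace defining an oriented matroid $M$. If $F$ is an acyclic flat of $M$, then \[ \mathcal Y_V \cap \big(0^F \times (\mathbb P^1_{\mathbb R})^{E \setminus F}\big) = \mathcal Y_{V \cap \ker(\pi_F)}. \]
   Context: $\mathbb P^1_{\mathbb R} = \mathbb R\cup\{\infty\}$. For a linear subspace $W \subset \mathbb R^E$, $\mathcal Y_W$ denotes the closure of $W \cap \mathbb R_{\geq 0}^E$ in $(\mathbb P^1_{\mathbb R})^E$ in the analytic topology. $\pi_F : \mathbb R^E \to \mathbb R^F$ is the coordinate projection, so $V\cap \ker(\pi_F)$ is the subspace of vectors of $V$ vanishing on $F$. $0^F \times (\mathbb P^1_{\mathbb R})^{E\setminus F}$ is the set of points of $(\mathbb P^1_{\mathbb R})^E$ whose coordinates in $F$ are $0$. Flats of $M$ are the zero sets $\{i: v_i=0\}$ of $v \in V$; a flat $F$ is acyclic if some $v \in V$ has $v_i = 0$ for $i \in F$ and $v_i > 0$ for $i \notin F$. *)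

From HB Require Import structures.
From mathcomp Require Import all_boot all_order all_algebra.
From mathcomp Require Import reals.
Set Implicit Arguments. Unset Strict Implicit. Unset Printing Implicit Defensive.
Import Order.TTheory GRing.Theory Num.Theory.
Local Open Scope ring_scope.

(* P^1_R = R ∪ {∞}, represented as option R with None = ∞. *)
Definition P1 (R : realType) := option R.

(* Basic neighbourhoods of the analytic topology of P^1_R:
   for a finite point a, the open interval (a - e, a + e);
   for ∞, the set {∞} ∪ {b : |b| > 1/e} (i.e. |1/b| < e in the chart at ∞). *)
Definition P1_ball (R : realType) (e : R) (x y : P1 R) : Prop :=
  match x, y with
  | Some a, Some b => `|b - a| < e
  | Some _, None => False
  | None, Some b => e^-1 < `|b|
  | None, None => True
  end.

Notation vecE E R := {ffun E -> R^o}.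

(* Closure in (P^1_R)^E (product of analytic topologies, E finite) of a set S
   of points, written via the neighbourhood basis of products of balls. *)
Definition P1_closure (R : realType) (E : finType) (S : (E -> P1 R) -> Prop)
    (p : E -> P1 R) : Prop :=
  forall e : R, 0 < e -> exists q, S q /\ forall i, P1_ball e (p i) (q i).

Definition Y (R : realType) (E : finType) (W : vecE E R -> Prop) : (E -> P1 R) -> Prop :=
  P1_closure (fun q => exists v : vecE E R,
      [/\ W v, (forall i, 0 <= v i) & q = (fun i => Some (v i))]).

Definition cap_ker (R : realType) (E : finType) (V : {vspace vecE E R}) (F : {set E})
  : vecE E R -> Prop := fun v => v \in V /\ forall i, i \in F -> v i = 0.

Definition flat (R : realType) (E : finType) (V : {vspace vecE E R}) (F : {set E}) : Prop :=
  exists2 v, v \in V & F = [set i | v i == 0].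

Definition acyclic_flat (R : realType) (E : finType) (V : {vspace vecE E R}) (F : {set E})
  : Prop :=
  flat V F /\ exists2 v, v \in V &
    (forall i, i \in F -> v i = 0) /\ (forall i, i \notin F -> 0 < v i).

From HB Require Import structures.
From mathcomp Require Import all_boot all_order all_algebra.
From mathcomp Require Import reals.
From mathcomp Require Import ring lra.
(* Let p lie in Y_V and vanish on F, and approximate it by some v in V with
   v >= 0 whose F-coordinates are at most d.  Restriction to F has a linear,
   hence bounded, right inverse on V: this gives z in V agreeing with v on F
   with |z| <= C d.  Then v - z vanishes on F and may be negative off F by at
   most C d, which a multiple of size O(d) of the acyclic vector (zero on F,
   positive off F) repairs.  The resulting u in V, vanishing on F and
   nonnegative, is O(d)-close to v, hence still close to p, also at the
   coordinates where p is infinite. *)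

Set Implicit Arguments. Unset Strict Implicit.
Import Order.TTheory GRing.Theory Num.Theory.
Local Open Scope ring_scope.

Section CoordinateSpace.
Variables (R : realType) (E : finType).
Implicit Types (x y : {ffun E -> R^o}) (F : {set E}).

Definition delta (k : E) : {ffun E -> R^o} := [ffun l => (l == k)%:R].

Lemma ffun_delta_expand x : x = \sum_k x k *: delta k.
Proof.
apply/ffunP => l; rewrite sum_ffunE (bigD1 l) //= big1 => [|k /negbTE kl].
  by rewrite !ffunE eqxx addr0; exact: (esym (mulr1 (x l : R))).
by rewrite !ffunE eq_sym kl; exact: (mulr0 (x k : R)).
Qed.

Lemma linear_sup_bounded (L : {linear {ffun E -> R^o} -> {ffun E -> R^o}}) :
  exists2 C, 0 <= C & forall y d, (forall k, `|y k| <= d) -> forall j, `|L y j| <= d * C.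
Proof.
pose C := \big[Order.max/0]_j \sum_k `|L (delta k) j|.
exists C => [|y d yd j]; first by apply: bigmax_ge_id.
have d0 : 0 <= d := le_trans (normr_ge0 _) (yd j).
rewrite {1}(ffun_delta_expand y) linear_sum sum_ffunE.
apply: le_trans (ler_norm_sum _ _ _) _.
apply: le_trans (ler_wpM2l d0 (le_bigmax 0 (fun j => \sum_k `|L (delta k) j|) j)).
rewrite mulr_sumr; apply: ler_sum => k _.
by rewrite linearZ ffunE normrM ler_wpM2r.
Qed.

Definition restr F x : {ffun E -> R^o} := [ffun i => if i \in F then x i else 0].

Fact restr_is_linear F : linear (restr F).
Proof.
move=> a x y; apply/ffunP => i; rewrite !ffunE.
by case: ifP; rewrite ?ffunE // scaler0 addr0.
Qed.

HB.instance Definition _ F :=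
  GRing.isLinear.Build R {ffun E -> R^o} {ffun E -> R^o} _ (restr F) (restr_is_linear F).

End CoordinateSpace.

Section BoundedLift.
Variables (R : realType) (E : finType) (V : {vspace {ffun E -> R^o}}) (F : {set E}).

Lemma restr_lift_bounded : exists2 C, 0 <= C & forall v, v \in V ->
  forall d, (forall k, `|restr F v k| <= d) ->
  exists2 z, z \in V & restr F z = restr F v /\ forall i, `|z i| <= d * C.
Proof.
pose g : 'Hom(subvs_of V, _) := (linfun (restr F) \o linfun vsval)%VF.
pose h := (linfun vsval \o g^-1)%VF.
have [C C0 hC] := linear_sup_bounded h.
exists C => // v vV d vd.
have gv : g (vsproj V v) = restr F v by rewrite comp_lfunE !lfunE /= vsprojK.
exists (h (restr F v)); first by rewrite comp_lfunE lfunE subvsP.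
split; last exact: hC.
have img_v : restr F v \in limg g by rewrite -gv memv_img ?memvf.
by rewrite -{2}(limg_lfunVK img_v) comp_lfunE [in RHS]comp_lfunE !lfunE.
Qed.

End BoundedLift.

Section AcyclicApproximation.
Variables (R : realType) (E : finType) (V : {vspace {ffun E -> R^o}}) (F : {set E}).
Variable w : {ffun E -> R^o}.
Hypotheses (wV : w \in V) (wF : forall i, i \in F -> w i = 0)
  (w_gt0 : forall i, i \notin F -> 0 < w i).

Lemma acyclic_vector_scaled : exists2 K, 0 <= K & forall c, 0 <= c ->
  exists2 w', w' \in V & [/\ forall i, i \in F -> w' i = 0,
    forall i, i \notin F -> c <= w' i & forall i, `|w' i| <= c * K].
Proof.
pose s := \big[Order.min/1]_(i | i \notin F) w i.
pose M := \big[Order.max/0]_i `|w i|.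
have s_gt0 : 0 < s by apply: lt_bigmin.
have s_le i : i \notin F -> s <= w i by move=> iF; apply: bigmin_le_cond.
exists (M / s) => [|c c0]; first by rewrite divr_ge0 ?bigmax_ge_id // ltW.
have cs0 : 0 <= c / s by rewrite divr_ge0 // ltW.
exists ((c / s) *: w); first exact: memvZ.
split => i; rewrite ffunE -[_ *: _]/(c / s * w i).
- by move/wF ->; rewrite mulr0.
- by move=> iF; rewrite -{1}(divfK (lt0r_neq0 s_gt0) c) ler_wpM2l ?s_le.
rewrite normrM ger0_norm // mulrA [leRHS]mulrAC.
exact: ler_wpM2l (le_bigmax 0 (fun i => `|w i|) i).
Qed.

Lemma nonneg_ker_approx : exists2 K, 0 <= K & forall v, v \in V -> (forall i, 0 <= v i) ->
  forall d, 0 <= d -> (forall k, k \in F -> `|v k| <= d) ->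
  exists u, [/\ cap_ker V F u, forall i, 0 <= u i & forall i, `|u i - v i| <= d * K].
Proof.
have [C C0 lift] := restr_lift_bounded V F.
have [Kw Kw0 scaled] := acyclic_vector_scaled.
exists (C * (1 + Kw)) => [|v vV v0 d d0 vF]; first by rewrite mulr_ge0 // addr_ge0.
have restr_v k : `|restr F v k| <= d by rewrite ffunE; case: ifP => [/vF|_]; rewrite ?normr0.
have [z zV [zv zC]] := lift v vV d restr_v.
have zF i : i \in F -> z i = v i by move=> iF; move/ffunP/(_ i): zv; rewrite !ffunE iF.
have [w' w'V [w'F w'c w'K]] := scaled (d * C) (mulr_ge0 d0 C0).
exists (v - z + w'); split => [|i|i]; rewrite ?ffunE.
- split => [|i iF]; first by rewrite rpredD ?rpredB.
  by rewrite !ffunE zF // w'F // subrr addr0.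
- case: (boolP (i \in F)) => iF; first by rewrite zF // w'F // subrr addr0.
  have := v0 i; have := w'c i iF; have := le_trans (ler_norm (z i)) (zC i); lra.
have -> : v i - z i + w' i - v i = w' i - z i by ring.
apply: le_trans (ler_normB _ _) _.
have := zC i; have := w'K i; rewrite mulrA mulrDr mulr1; lra.
Qed.

End AcyclicApproximation.

Lemma P1_ball_le (R : realType) (e1 e2 : R) (x y : P1 R) :
  0 < e1 -> e1 <= e2 -> P1_ball e1 x y -> P1_ball e2 x y.
Proof.
move=> e1_gt0 e12; case: x y => [a|] [b|] //= h; first exact: lt_le_trans e12.
by apply: le_lt_trans h; rewrite lef_pV2 ?posrE // (lt_le_trans e1_gt0).
Qed.

Lemma P1_ball_perturb (R : realType) (K e : R) : 0 <= K -> 0 < e ->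
  exists2 d, 0 < d & forall x a b,
    P1_ball d x (Some a) -> `|b - a| <= d * K -> P1_ball e x (Some b).
Proof.
(* [e' <= e] handles finite coordinates, [1/d >= 1/e' + K] those at infinity. *)
move=> K0 e0; pose e' := Num.min e 1; pose d := e' / (1 + K).
have e'0 : 0 < e' by rewrite lt_min e0 ltr01.
have e'e : e' <= e by rewrite ge_min lexx.
have e'1 : e' <= 1 by rewrite ge_min lexx orbT.
have K1 : 0 < 1 + K by rewrite ltr_wpDr.
have dK : d * (1 + K) = e' by rewrite /d mulfVK ?gt_eqF.
have d1 : d <= 1.
  by rewrite /d ler_pdivrMr // mul1r (le_trans e'1) // lerDl.
exists d => [|x a b]; first by rewrite divr_gt0.
move=> ha hb; apply: (P1_ball_le e'0 e'e).
case: x ha => [c|] /= ha.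
  have -> : b - c = (b - a) + (a - c) by ring.
  apply: le_lt_trans (ler_normD _ _) _; rewrite -dK mulrDr mulr1; lra.
have Xd : d^-1 = (1 + K) * e'^-1 by rewrite /d invf_div mulrC.
have X1 : 1 <= e'^-1 by rewrite invf_ge1.
have KX : K <= K * e'^-1 by rewrite ler_peMr.
have dKK : d * K <= K by rewrite ler_piMl.
have := ler_normD (a - b) b; rewrite subrK distrC.
rewrite Xd mulrDl mul1r in ha; lra.
Qed.

Lemma P1_ball_Some0 (R : realType) (x : P1 R) :
  (forall e, 0 < e -> P1_ball e x (Some 0)) -> x = Some 0.
Proof.
case: x => [a|] h; last by have := h 1 ltr01; rewrite /= normr0 invr1 ltr10.
case: (eqVneq a 0) => [-> // | a0].
have a_gt0 : 0 < `|a| by rewrite normr_gt0.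
by have := h _ a_gt0; rewrite /= sub0r normrN ltxx.
Qed.

Lemma Y_subset (R : realType) (E : finType) (W W' : {ffun E -> R^o} -> Prop) :
  (forall v, W v -> W' v) -> forall p, Y W p -> Y W' p.
Proof.
move=> WW' p Yp e e0; have [_ [[v [Wv v0 ->]] near_p]] := Yp e e0.
by exists (fun i => Some (v i)); split => //; exists v; split => //; apply: WW'.
Qed.

Theorem corollary3p5 (R : realType) (E : finType) (V : {vspace {ffun E -> R^o}})
    (F : {set E}) :
  acyclic_flat V F ->
  forall p : E -> P1 R,
    (Y (fun v => v \in V) p /\ (forall i, i \in F -> p i = Some 0)) <->
    Y (cap_ker V F) p.
Proof.
move=> [_ [w wV [wF w_gt0]]] p; split; last first.
  move=> Yp; split; first by apply: Y_subset Yp => v [].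
  move=> i iF; apply: P1_ball_Some0 => e e0.
  by have [_ [[v [[_ vF] _ ->]] /(_ i)]] := Yp e e0; rewrite vF.
case=> Yp pF e e0.
have [K K0 approx] := nonneg_ker_approx wV wF w_gt0.
have [d d0 perturb] := P1_ball_perturb K0 e0.
have [_ [[v [vV v0 ->]] vp]] := Yp d d0.
have vF k : k \in F -> `|v k| <= d.
  by move=> kF; have := vp k; rewrite pF //= subr0 => /ltW.
have [u [uV u0 uv]] := approx v vV v0 d (ltW d0) vF.
exists (fun i => Some (u i)); split; first by exists u.
by move=> i; apply: perturb (vp i) (uv i).
Qed.
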